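(* Let $q\in(0,1)$, $\beta<1$ real, $z\in\mathbb{C}\setminus\{0\}$ with $1+z^2\ne0$, and suppose $\beta(1+z^2)=q^2+z^2$. Then for all $n\in\mathbb{N}_0$, \[ p_n^{(q,\beta)}(z+z^{-1};q)=\frac{(q^2;q)_n}{z^n\left((q^2+z^2)/(1+z^2);q\right)_n}. \]
   Context: $(a;q)_n:=\prod_{j=0}^{n-1}(1-aq^j)$. The monic polynomials $p_n^{(\alpha,\beta)}(x;q)$ satisfy $p_{-1}=0$, $p_0=1$, $p_{n+1}(x)=xp_n(x)-\tilde\gamma_{n-1}\tilde\gamma_np_{n-1}(x)$ for $n\in\mathbb{N}_0$ with $\tilde\gamma_n=(1-\alpha q^n)/(1-\beta q^n)$; here $\alpha=q$. *)

From mathcomp Require Import all_boot all_order all_algebra.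
From mathcomp Require Import reals complex.
Set Implicit Arguments. Unset Strict Implicit. Unset Printing Implicit Defensive.
Import Order.TTheory GRing.Theory Num.Theory.
Local Open Scope ring_scope.

Definition qpoch {F : comRingType} (a q : F) (n : nat) : F :=
  \prod_(j < n) (1 - a * q ^+ j).

Definition gammat {F : fieldType} (alpha beta q : F) (n : int) : F :=
  (1 - alpha * q ^ n) / (1 - beta * q ^ n).

(* pair (p_{n-1}(x), p_n(x)) of the monic polynomials defined by
   p_{-1} = 0, p_0 = 1, p_{n+1} = x p_n - gamma~_{n-1} gamma~_n p_{n-1}. *)
Fixpoint pjac_pair {F : fieldType} (alpha beta q x : F) (n : nat) : F * F :=
  match n with
  | 0 => (0, 1)
  | m.+1 => let: (a, b) := pjac_pair alpha beta q x m in
            (b, x * b - gammat alpha beta q (m%:Z - 1) * gammat alpha beta q m%:Z * a)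
  end.

Definition pjac {F : fieldType} (alpha beta q x : F) (n : nat) : F :=
  (pjac_pair alpha beta q x n).2.

From mathcomp Require Import all_boot all_order all_algebra.
From mathcomp Require Import reals complex.
From mathcomp Require Import ring.
Import Order.TTheory GRing.Theory Num.Theory.
Local Open Scope ring_scope.
Local Open Scope complex_scope.

(* The candidate P_n = (q^2;q)_n / (z^n (beta;q)_n) has ratio
   P_(n+1) / P_n = (1 - q^(n+2)) / (z (1 - beta q^n)).  Dividing the three-term
   recurrence by P_n (1 - q^(n+2)) / ((1 - beta q^n) (1 - beta q^(n+1))) leaves
   the single identity 1 - q^2 v = (1 + z^2)(1 - beta v) - z^2 (1 - v) at
   v = q^(n+1), which is the hypothesis beta (1 + z^2) = q^2 + z^2.  The
   conditions 0 < q < 1 and beta < 1 keep every denominator 1 - beta q^n away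
   from 0. *)

Lemma qpochS (F : comNzRingType) (a q : F) (n : nat) :
  qpoch a q n.+1 = qpoch a q n * (1 - a * q ^+ n).
Proof. by rewrite /qpoch big_ord_recr. Qed.

Lemma pjac_pairS (F : fieldType) (alpha beta q x : F) (m : nat) :
  pjac_pair alpha beta q x m.+1 =
  let: (a, b) := pjac_pair alpha beta q x m in
  (b, x * b - gammat alpha beta q (m%:Z - 1) * gammat alpha beta q m%:Z * a).
Proof. by []. Qed.

Section ClosedForm.

Variables (F : fieldType) (q beta z : F).
Hypothesis z_neq0 : z != 0.
Hypothesis beta_z : beta * (1 + z ^+ 2) = q ^+ 2 + z ^+ 2.
Hypothesis denom_neq0 : forall k : nat, 1 - beta * q ^+ k != 0.

Let P (n : nat) : F := qpoch (q ^+ 2) q n / (z ^+ n * qpoch beta q n).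

Lemma one_sub_sqr_mul (v : F) :
  1 - q ^+ 2 * v = (1 + z ^+ 2) * (1 - beta * v) - z ^+ 2 * (1 - v).
Proof.
have -> : (1 + z ^+ 2) * (1 - beta * v) = 1 + z ^+ 2 - beta * (1 + z ^+ 2) * v.
  by ring.
by rewrite beta_z; ring.
Qed.

Lemma closed_form0 : P 0 = 1.
Proof. by rewrite /P /qpoch !big_ord0 mulr1 divr1. Qed.

Lemma closed_form1 : P 1 = z + z^-1.
Proof.
have := denom_neq0 0; have := one_sub_sqr_mul 1.
rewrite /P /qpoch !big_ord1 !expr0 !mulr1 expr1 subrr mulr0 subr0 => -> denom0.
by field; rewrite z_neq0 denom0.
Qed.

Lemma closed_form_recurrence (k : nat) :
  P k.+2 = (z + z^-1) * P k.+1
           - gammat q beta q k%:Z * gammat q beta q k.+1%:Z * P k.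
Proof.
have qpoch_neq0 : qpoch beta q k != 0 by apply/prodf_neq0 => i _.
have := denom_neq0 k; have := denom_neq0 k.+1.
rewrite /P /gammat !qpochS (one_sub_sqr_mul (q ^+ k.+1)).
change (q ^ k%:Z) with (q ^+ k); change (q ^ k.+1%:Z) with (q ^+ k.+1).
rewrite !(exprS q k) !(exprS z k.+1) (exprS z k) => denom_k1 denom_k.
by field; rewrite z_neq0 expf_neq0 // qpoch_neq0 denom_k denom_k1.
Qed.

Lemma pjac_pair_closed_form (k : nat) :
  pjac_pair q beta q (z + z^-1) k.+1 = (P k, P k.+1).
Proof.
elim: k => [|k IH]; first by rewrite /= closed_form0 closed_form1 mulr1 mulr0 subr0.
rewrite pjac_pairS IH (closed_form_recurrence k).
by have -> : (k.+1%:Z - 1 = k%:Z)%R by rewrite -addn1 PoszD addrK.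
Qed.

Lemma pjac_closed_form (n : nat) :
  pjac q beta q (z + z^-1) n = qpoch (q ^+ 2) q n / (z ^+ n * qpoch beta q n).
Proof.
case: n => [|n]; first by rewrite [RHS]closed_form0.
by rewrite /pjac pjac_pair_closed_form.
Qed.

End ClosedForm.

Lemma mulr_exprn_lt1 (R : realDomainType) (beta q : R) (k : nat) :
  0 <= q <= 1 -> beta < 1 -> beta * q ^+ k < 1.
Proof.
move=> /andP[q_ge0 q_le1] beta_lt1.
have qk_ge0 : 0 <= q ^+ k by rewrite exprn_ge0.
have [beta_le0 | beta_gt0] := lerP beta 0.
  by rewrite (le_lt_trans _ ltr01) // mulr_le0_ge0.
by rewrite (le_lt_trans _ beta_lt1) // ger_pMr // exprn_ile1.
Qed.

Theorem corollary2p19 (R : realType) (q beta : R) (z : R[i]) :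
  0 < q < 1 -> beta < 1 -> z != 0 -> 1 + z ^+ 2 != 0 ->
  beta%:C * (1 + z ^+ 2) = q%:C ^+ 2 + z ^+ 2 ->
  forall n : nat,
    pjac q%:C beta%:C q%:C (z + z^-1) n =
    qpoch (q%:C ^+ 2) q%:C n /
      (z ^+ n * qpoch ((q%:C ^+ 2 + z ^+ 2) / (1 + z ^+ 2)) q%:C n).
Proof.
move=> /andP[q_gt0 q_lt1] beta_lt1 z_neq0 z2_neq0 beta_z n.
have -> : (q%:C ^+ 2 + z ^+ 2) / (1 + z ^+ 2) = beta%:C by rewrite -beta_z mulfK.
apply: pjac_closed_form z_neq0 beta_z _ n => k.
have : beta * q ^+ k < 1 by apply: mulr_exprn_lt1; rewrite // !ltW.
rewrite -subr_gt0 => /lt0r_neq0.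
apply: contra_neq => eq0; apply: complexI.
by rewrite rmorphB rmorph1 rmorphM rmorphXn eq0.
Qed.
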